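(* For every natural number $n \geq 2$, there exists a regular graph $G_n$ with $\chi(G_n) = n = \gamma(G_n)$.
   Context: All graphs are finite and simple; $\chi$ denotes chromatic number. A set $D \subseteq V(G)$ is a total dominating set of $G$ if every vertex of $V(G)$ is adjacent to some vertex of $D$. Define $\gamma(G) := \min\{\chi(G[D]) : D \text{ a total dominating set of } G\}$, where $G[D]$ is the subgraph induced by $D$. *)

From mathcomp Require Import all_boot.
Set Implicit Arguments. Unset Strict Implicit. Unset Printing Implicit Defensive.

Definition simple_graph (T : finType) (e : rel T) : Prop :=
  symmetric e /\ irreflexive e.

Definition regular (T : finType) (e : rel T) : Prop :=
  exists d : nat, forall x : T, #|[set y | e x y]| = d.

Definition colorable_on (T : finType) (e : rel T) (D : {set T}) (k : nat) : bool :=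
  [exists f : {ffun T -> 'I_k},
     [forall x in D, forall y in D, e x y ==> (f x != f y)]].

Definition chromatic_number_on (T : finType) (e : rel T) (D : {set T}) (k : nat) : Prop :=
  colorable_on e D k /\ forall j, j < k -> ~~ colorable_on e D j.

Definition chromatic_number (T : finType) (e : rel T) (k : nat) : Prop :=
  chromatic_number_on e [set: T] k.

Definition total_dominating (T : finType) (e : rel T) (D : {set T}) : Prop :=
  forall v : T, exists2 u, u \in D & e v u.

Definition gamma_is (T : finType) (e : rel T) (n : nat) : Prop :=
  (exists D : {set T}, total_dominating e D /\ chromatic_number_on e D n) /\
  (forall (D : {set T}) (k : nat),
      total_dominating e D -> chromatic_number_on e D k -> n <= k).

From mathcomp Require Import all_boot zify.
Set Implicit Arguments. Unset Strict Implicit. Unset Printing Implicit Defensive.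

(* Let n = p.+2. Take n + 1 classes, each a blow-up of K_n whose vertices
   (c, i, b) carry a colour i, and add an independent vertex (c0, j, g) for
   every class c0, colour j and choice g of a colour different from j in each
   class; it sees, in every class c other than c0, the vertices of the chosen
   colour. Colouring by i is proper and each class contains an n-clique, so
   chi = n. A total dominating set D either meets every colour of some class,
   and then G[D] contains an n-clique, or misses a colour f c in every class c.
   Since n + 1 < 2n, some colour j is the value of f at most once, say at c0,
   and then the vertex (c0, j, g) with lift j (g c) = f c for c != c0 has no
   neighbour in D. *)

Lemma cards_sumType (I J : finType) (P : pred (I + J)) :
  #|[set u | P u]| = #|[set i | P (inl i)]| + #|[set j | P (inr j)]|.
Proof. by rewrite -!sum1dep_card big_sumType. Qed.

Lemma cards_prodType (I J : finType) (P : pred (I * J)) :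
  #|[set u | P u]| = \sum_i #|[set j | P (i, j)]|.
Proof.
under eq_bigr do rewrite -sum1dep_card.
by rewrite pair_big_dep sum1dep_card; apply: eq_card => -[i j]; rewrite !inE.
Qed.

Lemma card_ffun_fixed (I J : finType) (c : I) (w : J) :
  #|[set g : {ffun I -> J} | g c == w]| = #|J| ^ #|I|.-1.
Proof.
pose F x := if x == c then pred1 w else predT.
rewrite -(cardC1 c) (eq_card (B := family F)) => [|g]; last first.
  rewrite inE; apply/eqP/familyP => [gc x|/(_ c)]; last by rewrite /F eqxx => /eqP.
  by rewrite /F; case: eqP => [->|]; rewrite inE ?gc.
rewrite card_family foldrE big_map big_enum /= (bigD1 c) //= /F eqxx card1 mul1n.
rewrite (eq_bigr (fun _ => #|J|)) => [|x /negbTE ->]; last exact: eq_card.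
by rewrite prod_nat_const.
Qed.

Lemma card_ffun_lift_fixed (I : finType) n (c : I) (i j : 'I_n.+1) :
  #|[set g : {ffun I -> 'I_n} | i == lift j (g c)]| = (i != j) * n ^ #|I|.-1.
Proof.
case: (unliftP j i) => [w ->|->]; last first.
  by rewrite eqxx mul0n -(cards0 {ffun I -> 'I_n}); apply: eq_card => g; rewrite !inE eq_liftF.
rewrite eq_sym neq_lift mul1n -[X in _ = X ^ _](card_ord n) -(card_ffun_fixed c (w : 'I_n)).
by apply: eq_card => g; rewrite !inE (inj_eq lift_inj) eq_sym.
Qed.

Lemma small_fiber (I J : finType) (f : I -> J) (i0 : I) :
  #|I| < #|J|.*2 -> exists j c0, forall c, f c = j -> c = c0.
Proof.
move=> card_lt.
have [j fiber_le1] : exists j, #|[set c | f c == j]| <= 1.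
  apply/existsP; apply: contraLR card_lt => /existsPn big_fibers; rewrite -leqNgt.
  have -> : #|I| = \sum_j #|[set c | f c == j]|.
    by rewrite -sum1_card (partition_big f predT) //; under eq_bigr do rewrite sum1dep_card.
  rewrite -muln2 -sum_nat_const; apply: leq_sum => j _.
  by rewrite ltnNge big_fibers.
exists j; case: (pickP [pred c | f c == j]) => [c0 fc0 | no_c].
  by exists c0 => c fc; apply: (card_le1_eqP fiber_le1); rewrite inE ?fc.
by exists i0 => c fc; move: (no_c c); rewrite /= fc eqxx.
Qed.

Lemma clique_colorable_le (T K : finType) (e : rel T) (D : {set T}) m (h : K -> T) :
  (forall k, h k \in D) -> (forall k k', k != k' -> e (h k) (h k')) ->
  colorable_on e D m -> #|K| <= m.
Proof.
move=> hD h_clique /existsP [f /forall_inP f_proper].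
rewrite -(card_ord m); apply: (@leq_card _ _ (fun k => f (h k))) => k k' fhk.
apply/eqP; apply: contraT => k_neq.
by move: (f_proper _ (hD k)) => /forall_inP /(_ _ (hD k')); rewrite h_clique // fhk eqxx.
Qed.

Section Construction.

Variable p : nat.

(* The number of transversal neighbours of a clique vertex: n other classes,
   n - 1 colours j and (n - 1)^n maps g. With that many copies of each clique
   vertex the graph is regular of degree n * copies. *)
Definition copies := p.+2 * p.+1 * p.+1 ^ p.+2.

Lemma copies_gt0 : 0 < copies.
Proof. by rewrite /copies muln_gt0 expn_gt0. Qed.

Definition clique_vertex := ('I_p.+3 * 'I_p.+2 * 'I_copies)%type.
Definition transversal_vertex := ('I_p.+3 * 'I_p.+2 * {ffun 'I_p.+3 -> 'I_p.+1})%type.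
Definition vertex := (clique_vertex + transversal_vertex)%type.

Definition class_adj (a a' : clique_vertex) : bool :=
  let: (c, i, _) := a in let: (c', i', _) := a' in (c == c') && (i != i').

Definition hits (a : clique_vertex) (x : transversal_vertex) : bool :=
  let: (c, i, _) := a in let: (c0, j, g) := x in (c != c0) && (i == lift j (g c)).

Definition adj : rel vertex := fun u v =>
  match u, v with
  | inl a, inl a' => class_adj a a'
  | inl a, inr x | inr x, inl a => hits a x
  | inr _, inr _ => false
  end.

Lemma adj_sym : symmetric adj.
Proof.
by move=> [[[c i] b]|x] [[[c' i'] b']|y] //=; rewrite eq_sym [i' == _]eq_sym.
Qed.

Lemma adj_irr : irreflexive adj.
Proof. by move=> [[[c i] b]|x] /=; rewrite ?eqxx ?andbF. Qed.

Lemma card_class_adj (a : clique_vertex) : #|[set a' | class_adj a a']| = p.+1 * copies.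
Proof.
case: a => [[c i] b].
have -> : [set a' | class_adj (c, i, b) a'] = setX (setX [set c] [set~ i]) setT.
  by apply/setP => -[[c' i'] b']; rewrite !inE andbT eq_sym [i' == _]eq_sym.
by rewrite !cardsX cards1 cardsC1 cardsT !card_ord mul1n.
Qed.

Lemma card_hits_of (a : clique_vertex) : #|[set x | hits a x]| = copies.
Proof.
case: a => [[c i] b].
rewrite cards_prodType.
rewrite (eq_bigr (fun u => if (u.1 != c) && (u.2 != i) then p.+1 ^ p.+2 else 0)); last first.
  move=> [c0 j] _ /=; rewrite [c0 == c]eq_sym [j == i]eq_sym.
  case: (c != c0) => /=; last by rewrite -sum1dep_card big_pred0_eq.
  rewrite card_ffun_lift_fixed card_ord.
  by case: (i != j); rewrite ?mul1n.
rewrite -big_mkcond sum_nat_cond_const.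
have -> : [set u | (u.1 != c) && (u.2 != i)] = setX [set~ c] [set~ i].
  by apply/setP => -[c0 j]; rewrite !inE.
by rewrite cardsX !cardsC1 !card_ord /copies.
Qed.

Lemma card_hit_by (x : transversal_vertex) : #|[set a | hits a x]| = p.+2 * copies.
Proof.
case: x => [[c0 j] g].
have -> : [set a | hits a (c0, j, g)] = setX [set (c, lift j (g c)) | c in [set~ c0]] setT.
  apply/setP => -[[c i] b]; rewrite !inE andbT /=; apply/idP/imsetP.
    by case/andP => c_ne /eqP ->; exists c; rewrite ?inE.
  by case=> c' c'_ne [-> ->]; rewrite !inE in c'_ne; rewrite c'_ne eqxx.
rewrite cardsX cardsT card_imset => [|c c' [] //].
by rewrite cardsC1 !card_ord.
Qed.

Lemma card_adj (v : vertex) : #|[set y | adj v y]| = p.+2 * copies.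
Proof.
rewrite cards_sumType; case: v => [a|x] /=.
  by rewrite card_class_adj card_hits_of mulSn addnC.
by rewrite card_hit_by -sum1dep_card big_pred0_eq addn0.
Qed.

Definition colour (v : vertex) : 'I_p.+2 :=
  match v with inl (_, i, _) | inr (_, i, _) => i end.

Lemma colour_proper (u v : vertex) : adj u v -> colour u != colour v.
Proof.
have hits_neq a x : hits a x -> colour (inl a) != colour (inr x).
  by case: a x => [[c i] b] [[c0 j] g] /andP [_ /eqP ->]; rewrite eq_sym neq_lift.
case: u v => [a|x] [a'|y] //=; [|exact: hits_neq|rewrite eq_sym; exact: hits_neq].
by case: a a' => [[c i] b] [[c' i'] b'] /andP [].
Qed.

Lemma colorable_setT : colorable_on adj [set: vertex] p.+2.
Proof.
apply/existsP; exists [ffun v => colour v].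
by apply/forall_inP => u _; apply/forall_inP => v _; rewrite !ffunE; apply/implyP/colour_proper.
Qed.

Lemma class_colorable_le (D : {set vertex}) m c (b : 'I_p.+2 -> 'I_copies) :
  (forall i, inl (c, i, b i) \in D) -> colorable_on adj D m -> p.+2 <= m.
Proof.
move=> Db /(clique_colorable_le Db); rewrite card_ord; apply=> i i' /= i_ne.
by rewrite eqxx i_ne.
Qed.

Lemma chromatic_setT : chromatic_number_on adj [set: vertex] p.+2.
Proof.
split=> [|m m_lt]; first exact: colorable_setT.
apply: contraTN m_lt => m_col; rewrite -leqNgt.
exact: (class_colorable_le (c := ord0) (b := fun=> Ordinal copies_gt0) (fun=> in_setT _) m_col).
Qed.

Lemma total_dominating_setT : total_dominating adj [set: vertex].
Proof.
case=> [[[c i] b]|[[c0 j] g]].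
  by exists (inl (c, lift i ord0, b)); rewrite ?inE //= eqxx neq_lift.
pose c := lift c0 ord0.
exists (inl (c, lift j (g c), Ordinal copies_gt0)); rewrite ?inE //=.
by rewrite eq_sym neq_lift eqxx.
Qed.

Lemma total_dominating_chromatic_ge (D : {set vertex}) k :
  total_dominating adj D -> chromatic_number_on adj D k -> p.+2 <= k.
Proof.
move=> D_dom [D_col _].
case: (boolP [exists c, [forall i, [exists b, inl (c, i, b) \in D]]]).
  case/existsP=> c /forallP covered.
  have /fin_all_exists [b Db] : forall i, exists b, inl (c, i, b) \in D.
    by move=> i; apply/existsP/covered.
  exact: class_colorable_le Db D_col.
move/existsPn=> uncovered.
have /fin_all_exists [f f_missing] : forall c, exists i, forall b, inl (c, i, b) \notin D.
  by move=> c; have /forallPn [i /existsPn] := uncovered c; exists i.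
have [|j [c0 fiber_j]] := small_fiber f ord0; first by rewrite !card_ord; lia.
pose g : {ffun 'I_p.+3 -> 'I_p.+1} := [ffun c => odflt ord0 (unlift j (f c))].
have [[[[c i] b] | //] Dv] := D_dom (inr (c0, j, g)).
case/andP=> /= c_ne /eqP i_eq.
suff f_c : f c = i by case/negP: (f_missing c b); rewrite f_c.
rewrite i_eq ffunE; case: (unliftP j (f c)) => [w -> // | /fiber_j c_eq].
by rewrite c_eq eqxx in c_ne.
Qed.

End Construction.

Theorem theorem1p4 :
  forall n : nat, 2 <= n ->
  exists (T : finType) (e : rel T),
    [/\ simple_graph e, regular e, chromatic_number e n & gamma_is e n].
Proof.
move=> [|[|p]] // _; exists (vertex p), (@adj p); split.
- by split; [exact: adj_sym | exact: adj_irr].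
- by exists (p.+2 * copies p); exact: card_adj.
- exact: chromatic_setT.
- split; last exact: total_dominating_chromatic_ge.
  by exists [set: vertex p]; split; [exact: total_dominating_setT | exact: chromatic_setT].
Qed.
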